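(* Let $k$ be a commutative ring, $R$ a reduced (not necessarily commutative) $k$-algebra and $\overline R=(R,\Gamma,\{R_\gamma\}_{\gamma\in\Gamma})$ a grid-grading of $R$ such that $X=\{\gamma\in\Gamma: R_\gamma\neq 0\}$ is finite. Then: (1) for each $\gamma\in X$, the subgrid $\langle\gamma\rangle$ of $\Gamma$ generated by $\gamma$ is contained in $X$ and is a finite cyclic group; (2) if $R_1$ is a domain, then for every $\gamma\in\Gamma$ every nonzero $x\in R_\gamma$ is regular (i.e. $xy=0$ or $yx=0$ implies $y=0$), and $X=\langle X\rangle$ is a group (under the restriction of $*$); if moreover $R$ is commutative, this group is abelian; (3) if $R_1$ is a field, then for every $\gamma\in\Gamma$ every nonzero $x\in R_\gamma$ is invertible in $R$ with $x^{-1}\in R_{\gamma^{-1}}$, and $\dim_{R_1}R_\gamma=1$ for all $\gamma\in X$ (viewing $R_\gamma$ as a left $R_1$-module).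
   Context: A grid is a quadruple $G=(S,1,D,* )$ where $S$ is a set containing $1$, $D\subseteq S^2$ contains $(1,s),(s,1)$ for all $s$, $*:D\to S$ satisfies $s*1=1*s=s$, and $s*s=s$ implies $s=1$. A subgrid of $G$ is a grid $(T,1,E,\star)$ with $T\subseteq S$, $E=D\cap T^2$ and $\star=*|_E$; $\langle Y\rangle$ denotes the smallest subgrid containing $Y\subseteq S$. A grid-grading of a $k$-algebra $R$ is a triple $(R,G,\{R_g\}_{g\in G})$ with $\{R_g\}$ a family of $k$-submodules such that $\bigoplus_g R_g\to R$ is an isomorphism, $1\in R_1$, and whenever $R_gR_h\ne0$ the product $g*h$ is defined and $R_gR_h\subseteq R_{g*h}$. $R_1$ is then a subalgebra. Reduced means no nonzero nilpotent elements. *)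

From Stdlib Require List.
From HB Require Import structures.
From mathcomp Require Import all_boot all_order all_algebra.
Set Implicit Arguments. Unset Strict Implicit. Unset Printing Implicit Defensive.
Import GRing.Theory.
Local Open Scope ring_scope.

(* A grid (S,1,D,* ) is encoded by a partial operation [op : S -> S -> option S]:
   D = {(s,t) | op s t <> None} and s*t = u iff op s t = Some u. *)
Definition is_grid (S : Type) (one : S) (op : S -> S -> option S) : Prop :=
  (forall s, op one s = Some s) /\ (forall s, op s one = Some s) /\
  (forall s, op s s = Some s -> s = one).

(* A subset T (containing 1) carries a subgrid structure (E = D ∩ T², ⋆ = *|_E)
   iff it contains 1 and is closed under the defined products. *)
Definition subgrid (S : Type) (one : S) (op : S -> S -> option S) (T : S -> Prop) : Prop :=
  T one /\ forall s t u, T s -> T t -> op s t = Some u -> T u.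

Definition gen_subgrid (S : Type) (one : S) (op : S -> S -> option S) (Y : S -> Prop) : S -> Prop :=
  fun s => forall T, subgrid one op T -> (forall y, Y y -> T y) -> T s.

Definition is_group_on (S : Type) (one : S) (op : S -> S -> option S) (T : S -> Prop) : Prop :=
  T one /\
  (forall a b, T a -> T b -> exists c, op a b = Some c /\ T c) /\
  (forall a b c ab bc, T a -> T b -> T c -> op a b = Some ab -> op b c = Some bc ->
      op ab c = op a bc) /\
  (forall a, T a -> exists b, T b /\ op a b = Some one /\ op b a = Some one).

Definition is_abelian_on (S : Type) (op : S -> S -> option S) (T : S -> Prop) : Prop :=
  forall a b, T a -> T b -> op a b = op b a.

Fixpoint gpow (S : Type) (one : S) (op : S -> S -> option S) (g : S) (m : nat) : option S :=
  match m with
  | 0%N => Some one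
  | m'.+1 => match gpow one op g m' with Some x => op x g | None => None end
  end.

Definition finite_set (S : Type) (T : S -> Prop) : Prop :=
  exists l : seq S, forall s, T s -> List.In s l.

Definition is_cyclic_on (S : Type) (one : S) (op : S -> S -> option S) (T : S -> Prop) : Prop :=
  exists g, T g /\ forall t, T t -> exists m, gpow one op g m = Some t.

Definition grid_grading (k : comPzRingType) (R : algType k)
    (S : Type) (one : S) (op : S -> S -> option S) (Rg : S -> R -> Prop) : Prop :=
  (forall g, Rg g 0 /\ (forall x y, Rg g x -> Rg g y -> Rg g (x + y)) /\
             (forall (c : k) x, Rg g x -> Rg g (c *: x))) /\
  (* the canonical map (+)_g R_g -> R is surjective *)
  (forall r : R, exists l : seq (S * R),
      (forall p, List.In p l -> Rg p.1 p.2) /\ r = \sum_(p <- l) p.2) /\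
  (* ... and injective *)
  (forall l : seq (S * R), List.NoDup (map fst l) ->
      (forall p, List.In p l -> Rg p.1 p.2) -> \sum_(p <- l) p.2 = 0 ->
      forall p, List.In p l -> p.2 = 0) /\
  Rg one 1 /\
  (forall g h, (exists a b, Rg g a /\ Rg h b /\ a * b != 0) ->
     exists u, op g h = Some u /\ forall a b, Rg g a -> Rg h b -> Rg u (a * b)).

Definition reduced (R : pzRingType) : Prop :=
  forall (x : R) (n : nat), x ^+ n = 0 -> x = 0.

Definition sub_domain (R : pzRingType) (P : R -> Prop) : Prop :=
  (1 : R) != 0 /\ forall a b, P a -> P b -> a * b = 0 -> a = 0 \/ b = 0.

Definition sub_field (R : pzRingType) (P : R -> Prop) : Prop :=
  (1 : R) != 0 /\ (forall a b, P a -> P b -> a * b = b * a) /\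
  (forall a, P a -> a != 0 -> exists b, P b /\ a * b = 1 /\ b * a = 1).

From HB Require Import structures.
From mathcomp Require Import all_boot all_order all_algebra.
From mathcomp Require Import zify.
From Stdlib Require Import ClassicalEpsilon.
Import GRing.Theory.
Local Open Scope ring_scope.
Set Implicit Arguments. Unset Strict Implicit. Unset Printing Implicit Defensive.

(* If [x] is a nonzero element of [R_g], reducedness keeps every power [x^i]
   nonzero, so the grades [g^i] of the powers are all defined, lie in [X], and
   by uniqueness of degrees [i |-> g^i] is additive.  Finiteness of [X] forces a
   repetition, hence an idempotent grade [g^m], which in a grid is [1]: so
   <g> is cyclic and [x^m] lies in [R_1].  If [R_1] is a domain, a nonzero
   [a] of [R_1] satisfies [a z^m <> 0] for every nonzero homogeneous [z], so
   multiplication by [a] is injective componentwise, hence on [R]; through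
   [x^m] this makes every nonzero homogeneous element regular.  If [R_1] is a
   field, [x^(m-1) (x^m)^-1] is an inverse of [x] of grade [g^(m-1)]. *)

Lemma In_mem (T : eqType) (x : T) (s : seq T) : List.In x s <-> x \in s.
Proof.
elim: s => //= y s IH; rewrite in_cons.
split=> [[->|/IH->]|/orP[/eqP->|/IH]]; rewrite ?eqxx ?orbT //; by [left|right].
Qed.

Lemma uniq_NoDup (T : eqType) (s : seq T) : uniq s -> List.NoDup s.
Proof.
elim: s => [|x s IH] /=; first by constructor.
by case/andP=> xNs /IH; constructor=> // /In_mem; apply/negP.
Qed.

Lemma In_pigeonhole (T : Type) (f : nat -> T) (l : seq T) :
  (forall i, List.In (f i) l) -> exists i j, (i < j)%N /\ f i = f j.
Proof.
elim: l f => [|a l IH] f f_l; first by case: (f_l 0%N).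
have [[i0 fi0]|] := classic (exists i0, f i0 = a); last first.
  move=> fNa; apply: IH => i; case: (f_l i) => // fia.
  by case: fNa; exists i.
have [[j fj]|fNa] := classic (exists j, f (j + i0.+1)%N = a).
  by exists i0, (j + i0.+1)%N; split; [lia | rewrite fi0 fj].
have [|i [j [ltij eq_ij]]] := IH (fun i => f (i + i0.+1)%N).
  by move=> i; case: (f_l (i + i0.+1)%N) => // fia; case: fNa; exists i.
by exists (i + i0.+1)%N, (j + i0.+1)%N; split; first lia.
Qed.

Definition classic_eq (T : Type) (s t : T) : bool := excluded_middle_informative (s = t).

Lemma classic_eqP (T : Type) : Equality.axiom (@classic_eq T).
Proof. by move=> s t; rewrite /classic_eq; case: excluded_middle_informative; constructor. Qed.

Lemma reduced_expf_neq0 (R : pzRingType) (x : R) n :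
  reduced R -> x != 0 -> x ^+ n != 0.
Proof. by move=> redR; apply: contra => /eqP/redR ->. Qed.

Section PowerMap.
Variables (S : Type) (one : S) (op : S -> S -> option S).
Hypothesis grid : is_grid one op.
Variable p : nat -> S.
Hypotheses (p0 : p 0%N = one) (pD : forall i j, op (p i) (p j) = Some (p (i + j)%N)).

Lemma gpow_pow_map i : gpow one op (p 1) i = Some (p i).
Proof. by elim: i => [|i IH] /=; rewrite ?p0 // IH pD addn1. Qed.

Lemma pow_map_shift a b c : p a = p b -> p (a + c)%N = p (b + c)%N.
Proof. by move=> pab; apply: Some_inj; rewrite -!pD pab. Qed.

Lemma pow_map_mul_order n i : p n = one -> p (i * n)%N = one.
Proof.
move=> pn; elim: i => [|i IH]; first by rewrite mul0n.
by apply: Some_inj; rewrite mulSnr -pD IH pn -p0 pD.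
Qed.

(* Once [p] repeats it is periodic, so [p m] is idempotent for a large
   multiple [m] of the period, and idempotents of a grid are trivial. *)
Lemma pow_map_order (l : seq S) :
  (forall i, List.In (p i) l) -> exists n, p n.+1 = one.
Proof.
move=> p_l; have [i [j [ltij pij]]] := In_pigeonhole p_l.
set d := (j - i)%N; set m := (d * i.+1)%N.
have shift c : p (i + c + d)%N = p (i + c)%N.
  by rewrite (_ : i + c + d = j + c)%N ?(pow_map_shift c pij) // /d; lia.
have periodic t : p (m + d * t)%N = p m.
  elim: t => [|t IH]; first by rewrite muln0 addn0.
  have -> : (m + d * t.+1 = i + (m + d * t - i) + d)%N by rewrite /m /d; nia.
  by rewrite shift -IH; congr p; rewrite /m /d; nia.
have pmm : op (p m) (p m) = Some (p m) by rewrite pD -(periodic i.+1).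
have m_gt0 : (0 < m)%N by rewrite /m /d; lia.
case: grid => _ [_ idem]; exists m.-1; rewrite prednK //; exact: idem.
Qed.

Lemma gen_subgrid_pow_map s : gen_subgrid one op (eq (p 1)) s <-> exists i, s = p i.
Proof.
split=> [gen_s | [i ->] T [T1 T_op] T_p1].
  apply: (gen_s (fun s => exists i, s = p i)) => [|_ <-]; last by exists 1%N.
  split=> [|s1 s2 s3 [i ->] [j ->]]; first by exists 0%N.
  by rewrite pD => -[<-]; exists (i + j)%N.
elim: i => [|i IH]; first by rewrite p0.
by apply: T_op IH (T_p1 _ erefl) _; rewrite pD addn1.
Qed.

Lemma gen_subgrid_pow_map_group n :
  p n.+1 = one -> is_group_on one op (gen_subgrid one op (eq (p 1))).
Proof.
move=> pn; split; first by apply/gen_subgrid_pow_map; exists 0%N.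
split.
  move=> _ _ /gen_subgrid_pow_map[i ->] /gen_subgrid_pow_map[j ->].
  by exists (p (i + j)); rewrite pD; split=> //; apply/gen_subgrid_pow_map; exists (i + j)%N.
split.
  move=> a b c ab bc /gen_subgrid_pow_map[i ->] /gen_subgrid_pow_map[j ->].
  by move=> /gen_subgrid_pow_map[l ->] /[!pD] -[<-] [<-]; rewrite !pD addnA.
move=> _ /gen_subgrid_pow_map[i ->]; exists (p (i * n)).
split; first by apply/gen_subgrid_pow_map; exists (i * n)%N.
by rewrite !pD addnC -mulnSr pow_map_mul_order.
Qed.

Lemma gen_subgrid_pow_map_cyclic : is_cyclic_on one op (gen_subgrid one op (eq (p 1))).
Proof.
exists (p 1); split; first by apply/gen_subgrid_pow_map; exists 1%N.
by move=> _ /gen_subgrid_pow_map[i ->]; exists i; apply: gpow_pow_map.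
Qed.

End PowerMap.

Section Grading.
Variables (k : comPzRingType) (R : algType k) (S : Type) (one : S)
  (op : S -> S -> option S) (Rg : S -> R -> Prop).
Hypotheses (grid : is_grid one op) (grading : grid_grading one op Rg).

(* Grades are compared classically, so that components can be collected. *)
#[local] HB.instance Definition _ := hasDecEq.Build S (@classic_eqP S).

Lemma grade0 g : Rg g 0.
Proof. by case: grading => /(_ g)[? _] _. Qed.

Lemma gradeD g a b : Rg g a -> Rg g b -> Rg g (a + b).
Proof. by case: grading => /(_ g)[_ [gD _]] _; apply: gD. Qed.

Lemma gradeZ g c a : Rg g a -> Rg g (c *: a).
Proof. by case: grading => /(_ g)[_ [_ gZ]] _; apply: gZ. Qed.

Lemma grade_sum g (I : Type) (r : seq I) (P : pred I) (F : I -> R) :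
  (forall i, P i -> Rg g (F i)) -> Rg g (\sum_(i <- r | P i) F i).
Proof. by apply: big_ind; [exact: grade0 | exact: gradeD]. Qed.

Lemma grade1 : Rg one 1.
Proof. by case: grading => _ [_ [_ [? _]]]. Qed.

Lemma grade_mul_defined g h a b : Rg g a -> Rg h b -> a * b != 0 ->
  exists u, op g h = Some u /\ Rg u (a * b).
Proof.
case: grading => _ [_ [_ [_ mulD]]] ga hb abN0.
have [|u [ghu uab]] := mulD g h; first by exists a, b.
by exists u; split=> //; apply: uab.
Qed.

Lemma grade_mul g h u a b : op g h = Some u -> Rg g a -> Rg h b -> Rg u (a * b).
Proof.
move=> ghu ga hb; have [->|abN0] := eqVneq (a * b) 0; first exact: grade0.
by have [v [ghv vab]] := grade_mul_defined ga hb abN0; move: ghv; rewrite ghu => -[->].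
Qed.

Lemma grade_mul1l h a b : Rg one a -> Rg h b -> Rg h (a * b).
Proof. by case: grid => op1s _; apply: grade_mul. Qed.

Lemma grade_mul1r h a b : Rg h a -> Rg one b -> Rg h (a * b).
Proof. by case: grid => _ [ops1 _]; apply: grade_mul. Qed.

Lemma homogeneous_components_eq0 (l : seq (S * R)) :
  uniq (map fst l) -> (forall p, p \in l -> Rg p.1 p.2) -> \sum_(p <- l) p.2 = 0 ->
  forall p, p \in l -> p.2 = 0.
Proof.
case: grading => _ [_ [inj _]] uniq_l hom_l sum0 p /In_mem p_l.
apply: (inj l) sum0 p p_l; first exact: uniq_NoDup.
by move=> q /In_mem; apply: hom_l.
Qed.

Lemma grade_uniq u v z : Rg u z -> Rg v z -> z != 0 -> u = v.
Proof.
move=> uz vz zN0; apply/eqP/negP => uNv.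
have vNz : Rg v (- z) by rewrite -scaleN1r; apply: gradeZ.
have uniq_uv : uniq (map fst [:: (u, z); (v, - z)]) by rewrite /= !inE andbT; apply/negP.
move/eqP: zN0; apply; apply: (homogeneous_components_eq0 uniq_uv _ _ (mem_head _ _)).
  by move=> p; rewrite !inE => /orP[] /eqP->.
by rewrite big_cons big_seq1 subrr.
Qed.

Lemma op_grade_mul g h u a b : Rg g a -> Rg h b -> Rg u (a * b) -> a * b != 0 ->
  op g h = Some u.
Proof.
move=> ga hb uab abN0; have [v [-> vab]] := grade_mul_defined ga hb abN0.
by rewrite (grade_uniq vab uab).
Qed.

Lemma homogeneous_decomposition r : exists l : seq (S * R),
  [/\ uniq (map fst l), forall p, p \in l -> Rg p.1 p.2 & r = \sum_(p <- l) p.2].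
Proof.
case: grading => _ [/(_ r)[l [hom_l ->]] _].
exists [seq (h, \sum_(p <- l | p.1 == h) p.2) | h <- undup (map fst l)]; split.
- by rewrite -map_comp map_id undup_uniq.
- move=> _ /mapP[h _ ->]; rewrite big_seq_cond; apply: grade_sum => p /andP[/In_mem].
  by move=> /hom_l + /eqP <-.
rewrite big_map (exchange_big_dep predT) //=; apply: eq_big_seq => p p_l.
rewrite -big_filter (eq_filter (a2 := pred1 p.1)) => [|h]; last by rewrite /= eq_sym.
by rewrite filter_pred1_uniq ?undup_uniq ?mem_undup ?big_seq1 //; apply: map_f.
Qed.

Lemma homogeneous_kernel (f : R -> R) : {morph f : u v / u + v} -> f 0 = 0 ->
  (forall h z, Rg h z -> Rg h (f z)) -> (forall h z, Rg h z -> z != 0 -> f z != 0) ->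
  forall y, f y = 0 -> y = 0.
Proof.
move=> fD f0 f_hom f_nz y; have [l [uniq_l hom_l ->]] := homogeneous_decomposition y.
rewrite (big_morph f fD f0) => fy0; rewrite big1_seq // => p /andP[_ p_l].
have fp0 : f p.2 = 0.
  apply: (homogeneous_components_eq0 (l := [seq (q.1, f q.2) | q <- l]) _ _ _ (map_f _ p_l)).
  - by rewrite -map_comp.
  - by move=> _ /mapP[q /hom_l + ->]; apply: f_hom.
  - by rewrite big_map.
exact: contra_eq (f_nz _ _ (hom_l _ p_l)) fp0.
Qed.

Definition supp g := exists x, Rg g x /\ x != 0.

Definition grade_pow g i := odflt one (gpow one op g i).

Lemma grade_pow1 g : grade_pow g 1 = g.
Proof. by case: grid => op1s _; rewrite /grade_pow /= op1s. Qed.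

Section Reduced.
Hypothesis redR : reduced R.

Section HomogeneousPowers.
Variables (g : S) (x : R).
Hypotheses (gx : Rg g x) (xN0 : x != 0).

Lemma expr_neq0 i : x ^+ i != 0.
Proof. exact: reduced_expf_neq0. Qed.

Lemma gpow_homogeneous i : exists u, gpow one op g i = Some u /\ Rg u (x ^+ i).
Proof.
elim: i => [|i [u [gi ui]]]; first by exists one; split; last exact: grade1.
have xixN0 : x ^+ i * x != 0 by rewrite -exprSr expr_neq0.
have [v [uv vx]] := grade_mul_defined ui gx xixN0.
by exists v; rewrite /= gi uv exprSr.
Qed.

Lemma grade_pow_expr i : Rg (grade_pow g i) (x ^+ i).
Proof. by have [u [gi ui]] := gpow_homogeneous i; rewrite /grade_pow gi. Qed.

Lemma grade_powD i j : op (grade_pow g i) (grade_pow g j) = Some (grade_pow g (i + j)).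
Proof.
apply: op_grade_mul (grade_pow_expr i) (grade_pow_expr j) _ _; rewrite -exprD.
  exact: grade_pow_expr.
exact: expr_neq0.
Qed.

Lemma gen_subgrid_grade_pow s : gen_subgrid one op (eq g) s <-> exists i, s = grade_pow g i.
Proof. by rewrite -{1}[g]grade_pow1; exact: (gen_subgrid_pow_map erefl grade_powD). Qed.

Lemma gen_subgrid_sub_supp s : gen_subgrid one op (eq g) s -> supp s.
Proof.
move=> /gen_subgrid_grade_pow[i ->]; exists (x ^+ i).
by rewrite expr_neq0; split=> //; apply: grade_pow_expr.
Qed.

Hypothesis supp_finite : finite_set supp.

Lemma grade_pow_order : exists n, grade_pow g n.+1 = one.
Proof.
case: supp_finite => l supp_l; apply: (pow_map_order grid grade_powD (l := l)) => i.
by apply/supp_l/gen_subgrid_sub_supp/gen_subgrid_grade_pow; exists i.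
Qed.

Lemma grade_inverse : exists n, [/\ Rg one (x ^+ n.+1), Rg (grade_pow g n) (x ^+ n),
  op g (grade_pow g n) = Some one & op (grade_pow g n) g = Some one].
Proof.
have [n gn] := grade_pow_order; exists n; split.
- by rewrite -gn; apply: grade_pow_expr.
- exact: grade_pow_expr.
- by rewrite -{1}[g]grade_pow1 grade_powD add1n gn.
- by rewrite -{2}[g]grade_pow1 grade_powD addn1 gn.
Qed.

End HomogeneousPowers.

Hypothesis supp_finite : finite_set supp.

Lemma gen_subgrid_group g : supp g -> is_group_on one op (gen_subgrid one op (eq g)).
Proof.
case=> x [gx xN0]; have [n gn] := grade_pow_order gx xN0 supp_finite.
rewrite -[g in eq g]grade_pow1.
exact: (gen_subgrid_pow_map_group erefl (grade_powD gx xN0) gn).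
Qed.

Lemma gen_subgrid_finite g : supp g -> finite_set (gen_subgrid one op (eq g)).
Proof.
case=> x [gx xN0]; case: supp_finite => l supp_l.
by exists l => s /(gen_subgrid_sub_supp gx xN0) /supp_l.
Qed.

Lemma gen_subgrid_cyclic g : supp g -> is_cyclic_on one op (gen_subgrid one op (eq g)).
Proof.
case=> x [gx xN0]; rewrite -[g in eq g]grade_pow1.
exact: (gen_subgrid_pow_map_cyclic erefl (grade_powD gx xN0)).
Qed.

Section Domain.
Hypothesis domR1 : sub_domain (Rg one).

Lemma unit_grade_mul_neq0 a h z : Rg one a -> a != 0 -> Rg h z -> z != 0 ->
  a * z != 0 /\ z * a != 0.
Proof.
move=> a1 aN0 hz zN0; have [n [zn1 _ _ _]] := grade_inverse hz zN0 supp_finite.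
have znN0 := expr_neq0 zN0 n.+1; case: domR1 => _ noZD.
split; apply/eqP => zero.
- have [|a0|zn0] := noZD _ _ a1 zn1; first by rewrite exprS mulrA zero mul0r.
    by rewrite a0 eqxx in aN0.
  by rewrite zn0 eqxx in znN0.
- have [|zn0|a0] := noZD _ _ zn1 a1; first by rewrite exprSr -mulrA zero mulr0.
    by rewrite zn0 eqxx in znN0.
  by rewrite a0 eqxx in aN0.
Qed.

Lemma unit_grade_regular a y : Rg one a -> a != 0 ->
  (a * y = 0 -> y = 0) /\ (y * a = 0 -> y = 0).
Proof.
move=> a1 aN0; split.
  apply: (homogeneous_kernel (f := *%R a)) => [u v|||]; rewrite ?mulrDr ?mulr0 //.
    by move=> h z; apply: grade_mul1l a1.
  by move=> h z hz zN0; case: (unit_grade_mul_neq0 a1 aN0 hz zN0).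
apply: (homogeneous_kernel (f := *%R^~ a)) => [u v|||]; rewrite /= ?mulrDl ?mul0r //.
  by move=> h z hz; apply: grade_mul1r hz a1.
by move=> h z hz zN0; case: (unit_grade_mul_neq0 a1 aN0 hz zN0).
Qed.

Lemma homogeneous_regular g x y : Rg g x -> x != 0 ->
  (x * y = 0 -> y = 0) /\ (y * x = 0 -> y = 0).
Proof.
move=> gx xN0; have [n [xn1 _ _ _]] := grade_inverse gx xN0 supp_finite.
have [left right] := unit_grade_regular y xn1 (expr_neq0 xN0 n.+1).
split=> [xy0|yx0]; [apply: left | apply: right].
  by rewrite exprSr -mulrA xy0 mulr0.
by rewrite exprS mulrA yx0 mul0r.
Qed.

Lemma homogeneous_mul_neq0 g h x y : Rg g x -> x != 0 -> Rg h y -> y != 0 -> x * y != 0.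
Proof. by move=> gx xN0 _; apply: contra_neq => /(homogeneous_regular y gx xN0).1. Qed.

Lemma supp_mul a b : supp a -> supp b -> exists c, op a b = Some c /\ supp c.
Proof.
move=> [x [xa xN0]] [y [yb yN0]]; have xyN0 := homogeneous_mul_neq0 xa xN0 yb yN0.
by have [c [abc cxy]] := grade_mul_defined xa yb xyN0; exists c; split; last exists (x * y).
Qed.

Lemma supp1 : supp one.
Proof. by exists 1; split; [exact: grade1 | case: domR1]. Qed.

Lemma gen_subgrid_supp s : supp s <-> gen_subgrid one op supp s.
Proof.
split=> [supp_s T _ supp_T | gen_s]; first exact: supp_T.
apply: (gen_s supp) => //; split=> [|a b c supp_a supp_b abc]; first exact: supp1.
by have [c' [abc' supp_c']] := supp_mul supp_a supp_b; move: abc'; rewrite abc => -[->].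
Qed.

Lemma supp_group : is_group_on one op supp.
Proof.
split; first exact: supp1.
split; first exact: supp_mul.
split.
  move=> a b c ab bc [x [xa xN0]] [y [yb yN0]] [z [zc zN0]] abE bcE.
  have xy_ab := grade_mul abE xa yb; have yz_bc := grade_mul bcE yb zc.
  have xyzN0 := homogeneous_mul_neq0 xy_ab (homogeneous_mul_neq0 xa xN0 yb yN0) zc zN0.
  have [u [-> uxyz]] := grade_mul_defined xy_ab zc xyzN0.
  by rewrite (op_grade_mul (u := u) xa yz_bc) // mulrA.
move=> a [x [xa xN0]]; have [n [_ xn an na]] := grade_inverse xa xN0 supp_finite.
by exists (grade_pow a n); split=> //; exists (x ^+ n); rewrite expr_neq0.
Qed.

Lemma supp_abelian : (forall a b : R, a * b = b * a) -> is_abelian_on op supp.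
Proof.
move=> mulC a b [x [xa xN0]] [y [yb yN0]]; have xyN0 := homogeneous_mul_neq0 xa xN0 yb yN0.
have [u [-> uxy]] := grade_mul_defined xa yb xyN0.
by rewrite (op_grade_mul (u := u) yb xa) // mulC.
Qed.

End Domain.

Section Field.
Hypothesis fieldR1 : sub_field (Rg one).

Lemma homogeneous_invertible g x : Rg g x -> x != 0 -> exists g' y,
  op g g' = Some one /\ op g' g = Some one /\ Rg g' y /\ x * y = 1 /\ y * x = 1.
Proof.
move=> gx xN0; have [n [xn1 xn ginv invg]] := grade_inverse gx xN0 supp_finite.
case: fieldR1 => _ [_ /(_ _ xn1 (expr_neq0 xN0 n.+1))[b [b1 [xb bx]]]].
have left_inv : b * x ^+ n * x = 1 by rewrite -mulrA -exprSr.
have right_inv : x * (x ^+ n * b) = 1 by rewrite mulrA -exprS.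
have inv_eq : b * x ^+ n = x ^+ n * b.
  by rewrite -[LHS]mulr1 -right_inv (mulrA (b * _)) left_inv mul1r.
exists (grade_pow g n), (b * x ^+ n); split; [|split; [|split; [|split]]] => //.
  exact: grade_mul1l.
by rewrite inv_eq.
Qed.

Lemma grade_free_rank1 g : supp g -> exists e, Rg g e /\ e != 0 /\
  (forall x, Rg g x -> exists a, Rg one a /\ x = a * e) /\
  (forall a, Rg one a -> a * e = 0 -> a = 0).
Proof.
move=> [e [ge eN0]]; have [g' [y [gg' [_ [g'y [ey ye]]]]]] := homogeneous_invertible ge eN0.
exists e; split; [|split; [|split]] => // [x gx | a _ ae0].
  by exists (x * y); split; [exact: grade_mul gg' gx g'y | rewrite -mulrA ye mulr1].
by rewrite -[a]mulr1 -ey mulrA ae0 mul0r.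
Qed.

End Field.

End Reduced.

End Grading.

Theorem mainTheorem4 (k : comPzRingType) (R : algType k)
    (S : Type) (one : S) (op : S -> S -> option S) (Rg : S -> R -> Prop) :
  is_grid one op ->
  reduced R ->
  grid_grading one op Rg ->
  let X := fun g => exists x, Rg g x /\ x != 0 in
  finite_set X ->
  (* (1) *)
  (forall g, X g ->
     (forall s, gen_subgrid one op (eq g) s -> X s) /\
     is_group_on one op (gen_subgrid one op (eq g)) /\
     finite_set (gen_subgrid one op (eq g)) /\
     is_cyclic_on one op (gen_subgrid one op (eq g))) /\
  (* (2) *)
  (sub_domain (Rg one) ->
     (forall g x, Rg g x -> x != 0 ->
        forall y : R, (x * y = 0 -> y = 0) /\ (y * x = 0 -> y = 0)) /\
     (forall s, X s <-> gen_subgrid one op X s) /\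
     is_group_on one op X /\
     ((forall a b : R, a * b = b * a) -> is_abelian_on op X)) /\
  (* (3) *)
  (sub_field (Rg one) ->
     (forall g x, Rg g x -> x != 0 ->
        exists g' y, op g g' = Some one /\ op g' g = Some one /\
                     Rg g' y /\ x * y = 1 /\ y * x = 1) /\
     (forall g, X g ->
        exists e, Rg g e /\ e != 0 /\
          (forall x, Rg g x -> exists a, Rg one a /\ x = a * e) /\
          (forall a, Rg one a -> a * e = 0 -> a = 0))).
Proof.
move=> grid redR grading /= supp_finite; split; [|split].
- move=> g Xg; have [x [gx xN0]] := Xg; split; [|split; [|split]].
  + by move=> s; apply: (gen_subgrid_sub_supp grid grading redR gx xN0 (s := s)).
  + exact: gen_subgrid_group grid grading redR supp_finite g Xg.
  + exact: gen_subgrid_finite grid grading redR supp_finite g Xg.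
  + exact: gen_subgrid_cyclic grid grading redR g Xg.
- move=> domR1; split; [|split; [|split]].
  + move=> g x gx xN0 y.
    exact: homogeneous_regular grid grading redR supp_finite domR1 g x y gx xN0.
  + exact: gen_subgrid_supp grid grading redR supp_finite domR1.
  + exact: supp_group grid grading redR supp_finite domR1.
  + exact: supp_abelian grid grading redR supp_finite domR1.
- move=> fieldR1; split.
  + exact: homogeneous_invertible grid grading redR supp_finite fieldR1.
  + exact: grade_free_rank1 grid grading redR supp_finite fieldR1.
Qed.
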